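(* Let $R$ be a noetherian ring and $M$ a finitely generated $R$-module. (i) $\mathrm{Fitt}^0_R(M)\subseteq\mathrm{char}_R(M)$. (ii) If the projective dimension of $M$ is at most $1$, then $\mathrm{Fitt}^0_R(M)=\mathrm{char}_R(M)$.
   Context: $M^*=\mathrm{Hom}_R(M,R)$, $\bigcap^n_RM=(\bigwedge^n_R(M^* ))^*$. For a finitely generated $R$-module $M$, choose $n>0$ and an exact sequence $0\to N\to R^n\to M\to0$ and set $\mathrm{char}_R(M)=\mathrm{im}(\bigcap^n_RN\to\bigcap^n_RR^n=R)$ (independent of the choice). $\mathrm{Fitt}^0_R$ is the zeroth Fitting ideal. *)

From HB Require Import structures.
From mathcomp Require Import all_boot all_order all_algebra.
Set Implicit Arguments. Unset Strict Implicit. Unset Printing Implicit Defensive.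
Import Order.TTheory GRing.Theory Num.Theory.
Local Open Scope ring_scope.

Section Defs.
Variable R : comNzRingType.

Definition is_ideal (I : R -> Prop) : Prop :=
  [/\ I 0, (forall x y, I x -> I y -> I (x + y)) & (forall a x, I x -> I (a * x))].

Definition ideal_gen (S : R -> Prop) : R -> Prop :=
  fun x => exists (k : nat) (a s : 'I_k -> R),
    (forall i, S (s i)) /\ x = \sum_(i < k) a i * s i.

Definition noetherian : Prop :=
  forall I : R -> Prop, is_ideal I ->
    exists (k : nat) (s : 'I_k -> R), forall x, I x <-> ideal_gen (fun y => exists i, y = s i) x.

Definition surjective_map (A B : Type) (f : A -> B) := forall b, exists a, f a = b.

Definition projective (P : lmodType R) : Prop :=
  forall (A B : lmodType R) (g : {linear A -> B}) (f : {linear P -> B}),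
    surjective_map g -> exists h : {linear P -> A}, forall x, g (h x) = f x.

Definition proj_dim_le1 (M : lmodType R) : Prop :=
  exists (P0 P1 : lmodType R) (i : {linear P1 -> P0}) (p : {linear P0 -> M}),
    [/\ projective P0, projective P1, injective i, surjective_map p &
        forall x, p x = 0 <-> exists y, x = i y].

Variables (M : lmodType R) (n : nat) (pi : {linear 'rV[R]_n -> M}).
(* presentation 0 -> N -> R^n -> M -> 0 with N = ker pi *)
Definition ker_pres (v : 'rV[R]_n) : Prop := pi v = 0.

(* Fitt^0 : ideal generated by the n x n minors of the relation matrices,
   i.e. by the determinants of n-tuples of elements of N *)
Definition Fitt0 : R -> Prop :=
  ideal_gen (fun r => exists A : 'M[R]_n, (forall i, ker_pres (row i A)) /\ r = \det A).

(* elements of N^* = Hom_R(N,R), represented by functions R^n -> R considered on N *)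
Definition Nlin (phi : 'rV[R]_n -> R) : Prop :=
  forall a u v, ker_pres u -> ker_pres v -> phi (a *: u + v) = a * phi u + phi v.

Definition Neq (phi psi : 'rV[R]_n -> R) : Prop := forall v, ker_pres v -> phi v = psi v.

Definition upd (g : 'I_n -> 'rV[R]_n -> R) (i : 'I_n) (phi : 'rV[R]_n -> R) :=
  fun j => if j == i then phi else g j.

(* elements of (/\^n N^* )^* = alternating n-linear forms on N^* *)
Definition alt_form (Phi : ('I_n -> 'rV[R]_n -> R) -> R) : Prop :=
  [/\ (* well-defined on N^* *)
      (forall g g', (forall i, Nlin (g i)) -> (forall i, Nlin (g' i)) ->
          (forall i, Neq (g i) (g' i)) -> Phi g = Phi g'),
      (forall g i a phi psi, (forall j, Nlin (g j)) -> Nlin phi -> Nlin psi ->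
          Phi (upd g i (fun v => a * phi v + psi v)) =
          a * Phi (upd g i phi) + Phi (upd g i psi)) &
      (forall g i j, (forall k, Nlin (g k)) -> i != j -> Neq (g i) (g j) -> Phi g = 0)].

(* char_R(M) = image of \bigcap^n N -> \bigcap^n R^n = R; the identification
   \bigcap^n R^n = R is evaluation at e_1^* /\ ... /\ e_n^* *)
Definition char_pres : R -> Prop :=
  fun r => exists Phi, alt_form Phi /\ r = Phi (fun i v => v ord0 i).

End Defs.

(* (i) A generator det A of Fitt^0 (rows a_j of A in N) is the value at the
   coordinate forms e_1^*, ..., e_n^* of the alternating form
   (phi_i) |-> det (phi_i a_j) on N^*, and char_R(M) is an ideal.
   (ii) N is finitely generated because R is noetherian. If pd M <= 1 via
   0 -> P_1 -i-> P_0 -p-> M -> 0, let sigma : P_0 -> R^n lift p and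
   tau : R^n -> P_0 lift pi. For v in N we have tau v = i y, hence
   v = sum_j v_j (e_j - sigma (tau e_j)) + sigma (i y); lifting sigma o i through
   generators x_k of N (P_1 is projective) turns this into a dual basis
   v = sum_k f_k(v) x_k with f_k in N^*. On N the coordinate forms are then
   e_i^* = sum_k x_k(i) f_k, so multilinear expansion writes Phi(e^* ) as a sum
   over maps kappa : [n] -> [m]; non-injective kappa contribute 0, and the
   kappa with a given image add up to det (x_(kappa j)(i)) * Phi (f o kappa),
   which lies in Fitt^0. *)

From HB Require Import structures.
From mathcomp Require Import all_boot all_order all_algebra fingroup perm ring.
From Stdlib Require Import FunctionalExtensionality IndefiniteDescription Classical_Prop.
Set Implicit Arguments. Unset Strict Implicit. Unset Printing Implicit Defensive.
Import GRing.Theory.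
Local Open Scope ring_scope.

Definition fcat (T : Type) p q (x : 'I_p -> T) (y : 'I_q -> T) (j : 'I_(p + q)) : T :=
  match split j with inl i => x i | inr l => y l end.

Lemma fcat_lshift T p q (x : 'I_p -> T) (y : 'I_q -> T) i : fcat x y (lshift q i) = x i.
Proof. by rewrite /fcat (unsplitK (inl i : 'I_p + 'I_q)). Qed.

Lemma fcat_rshift T p q (x : 'I_p -> T) (y : 'I_q -> T) l : fcat x y (rshift p l) = y l.
Proof. by rewrite /fcat (unsplitK (inr l : 'I_p + 'I_q)). Qed.

Lemma fcatP T p q (x : 'I_p -> T) (y : 'I_q -> T) (P : T -> Prop) :
  (forall i, P (x i)) -> (forall l, P (y l)) -> forall j, P (fcat x y j).
Proof. by move=> Px Py j; rewrite /fcat; case: split. Qed.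

Section Ideals.
Variable R : comNzRingType.
Implicit Types (S I : R -> Prop).

Lemma is_ideal_sum I (J : Type) (r : seq J) (F : J -> R) :
  is_ideal I -> (forall j, I (F j)) -> I (\sum_(j <- r) F j).
Proof. by case=> I0 ID _ IF; apply: big_ind. Qed.

Lemma ideal_gen_mem S x : S x -> ideal_gen S x.
Proof.
by move=> Sx; exists 1%N, (fun _ => 1), (fun _ => x); rewrite big_ord1 mul1r.
Qed.

Lemma is_ideal_gen S : is_ideal (ideal_gen S).
Proof.
split.
- by exists 0%N, (fun _ => 0), (fun _ => 0); rewrite big_ord0; split => [[]|].
- move=> _ _ [k1 [a1 [s1 [S1 ->]]]] [k2 [a2 [s2 [S2 ->]]]].
  exists (k1 + k2)%N, (fcat a1 a2), (fcat s1 s2); split; first exact: fcatP.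
  rewrite big_split_ord; congr (_ + _); apply: eq_bigr => i _.
    by rewrite !fcat_lshift.
  by rewrite !fcat_rshift.
- move=> a _ [k [b [s [Ss ->]]]]; exists k, (fun i => a * b i), s; split => //.
  by rewrite mulr_sumr; under eq_bigr do rewrite mulrA.
Qed.

Lemma ideal_gen_min S I : is_ideal I -> (forall s, S s -> I s) ->
  forall x, ideal_gen S x -> I x.
Proof.
move=> HI SI _ [k [a [s [Ss ->]]]]; apply: is_ideal_sum => // i.
by case: HI => _ _; apply; apply: SI.
Qed.

End Ideals.

Definition lincomb (R : nzRingType) (V : lmodType R) m (x : 'I_m -> V) (a : 'rV[R]_m) : V :=
  \sum_k a 0 k *: x k.

Lemma eq_lincomb (R : nzRingType) (V : lmodType R) m (x y : 'I_m -> V) a :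
  x =1 y -> lincomb x a = lincomb y a.
Proof. by move=> xy; apply: eq_bigr => k _; rewrite xy. Qed.

Section LinearCombinations.
Variables (R : comNzRingType) (V : lmodType R).

Fact lincomb_is_linear m (x : 'I_m -> V) : linear (lincomb x).
Proof.
move=> c a b; rewrite /lincomb scaler_sumr -big_split; apply: eq_bigr => k _.
by rewrite !mxE scalerDl scalerA.
Qed.

HB.instance Definition _ m (x : 'I_m -> V) :=
  GRing.isLinear.Build R 'rV[R]_m V _ (lincomb x) (lincomb_is_linear x).

Lemma linear_lincomb (W : lmodType R) (f : {linear V -> W}) m (x : 'I_m -> V) a :
  f (lincomb x a) = lincomb (f \o x) a.
Proof. by rewrite linear_sum; apply: eq_bigr => k _; rewrite linearZ. Qed.

Lemma lincombB m (x y : 'I_m -> V) a :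
  lincomb (fun k => x k - y k) a = lincomb x a - lincomb y a.
Proof. by rewrite /lincomb -sumrB; apply: eq_bigr => k _; rewrite scalerBr. Qed.

Lemma lincomb_mulmx m p (x : 'I_m -> V) (a : 'rV[R]_p) (C : 'M[R]_(p, m)) :
  lincomb x (a *m C) = lincomb (fun j => lincomb x (row j C)) a.
Proof. by rewrite mulmx_sum_row linear_sum; apply: eq_bigr => j _; rewrite linearZ. Qed.

Lemma linear_rV_lincomb n (f : {linear 'rV[R]_n -> V}) v :
  f v = lincomb (fun j => f (delta_mx 0 j)) v.
Proof. by rewrite {1}(row_sum_delta v) linear_sum; apply: eq_bigr => j _; rewrite linearZ. Qed.

Lemma lincomb_delta_mx m (x : 'I_m -> V) k : lincomb x (delta_mx 0 k) = x k.
Proof.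
rewrite /lincomb (bigD1 k) //= big1 => [|j /negbTE njk].
  by rewrite mxE !eqxx scale1r addr0.
by rewrite mxE njk andbF scale0r.
Qed.

Lemma lincomb_row_mx p q (x : 'I_p -> V) (y : 'I_q -> V) a b :
  lincomb (fcat x y) (row_mx a b) = lincomb x a + lincomb y b.
Proof.
rewrite /lincomb big_split_ord; congr (_ + _); apply: eq_bigr => k _.
  by rewrite row_mxEl fcat_lshift.
by rewrite row_mxEr fcat_rshift.
Qed.

End LinearCombinations.

Section NoetherianModules.
Variable R : comNzRingType.
Implicit Types (U V W : lmodType R).

Definition is_submod V (S : V -> Prop) : Prop :=
  [/\ S 0, (forall u v, S u -> S v -> S (u + v)) & (forall a u, S u -> S (a *: u))].

Definition fin_spanned V (S : V -> Prop) : Prop :=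
  exists m (x : 'I_m -> V), (forall k, S (x k)) /\
    forall v, S v -> exists a, v = lincomb x a.

Definition noetherian_mod V : Prop :=
  forall S : V -> Prop, is_submod S -> fin_spanned S.

Lemma is_submod_lincomb V (S : V -> Prop) m (x : 'I_m -> V) a :
  is_submod S -> (forall k, S (x k)) -> S (lincomb x a).
Proof. by case=> S0 SD SZ Sx; apply: big_ind => // k _; apply: SZ. Qed.

Lemma is_submod_span V m (x : 'I_m -> V) : is_submod (fun v => exists a, v = lincomb x a).
Proof.
split; first by exists 0; rewrite linear0.
  by move=> _ _ [a ->] [b ->]; exists (a + b); rewrite linearD.
by move=> c _ [a ->]; exists (c *: a); rewrite linearZ.
Qed.

Lemma is_submod_image V W (f : {linear V -> W}) (S : V -> Prop) :
  is_submod S -> is_submod (fun w => exists2 v, S v & f v = w).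
Proof.
case=> S0 SD SZ; split; first by exists 0; rewrite ?linear0.
  by move=> _ _ [u Su <-] [v Sv <-]; exists (u + v); rewrite ?linearD //; apply: SD.
by move=> a _ [u Su <-]; exists (a *: u); rewrite ?linearZ //; apply: SZ.
Qed.

Lemma is_submod_preimage V W (f : {linear V -> W}) (S : W -> Prop) :
  is_submod S -> is_submod (fun v => S (f v)).
Proof.
case=> S0 SD SZ; split; first by rewrite linear0.
  by move=> u v Su Sv; rewrite linearD; apply: SD.
by move=> a u Su; rewrite linearZ; apply: SZ.
Qed.

Lemma noetherian_mod_ext U V W (g : {linear U -> V}) (f : {linear V -> W}) :
  (forall v, f v = 0 -> exists u, v = g u) ->
  noetherian_mod U -> noetherian_mod W -> noetherian_mod V.
Proof.
move=> ker_f_sub NU NW S HS; have [_ SD SZ] := HS.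
have [p [y [Sy spany]]] := NW _ (is_submod_image f HS).
have [w Sw fw] := fin_all_exists2 Sy.
have [q [z [Sz spanz]]] := NU _ (is_submod_preimage g HS).
exists (p + q)%N, (fcat w (g \o z)); split; first exact: fcatP.
move=> v Sv; have [a fv] := spany (f v) (ex_intro2 _ _ v Sv erefl).
have Sv' : S (v - lincomb w a).
  by apply: SD => //; rewrite -scaleN1r; apply: SZ; apply: is_submod_lincomb.
have /ker_f_sub [u Eu] : f (v - lincomb w a) = 0.
  by rewrite linearB linear_lincomb fv (eq_lincomb _ fw) subrr.
have [b Eb] := spanz u (eq_ind _ S Sv' _ Eu).
exists (row_mx a b); rewrite lincomb_row_mx -linear_lincomb -Eb -Eu.
by rewrite addrC subrK.
Qed.

Lemma span_coord_mx V (S : V -> Prop) m (x : 'I_m -> V) n (d : 'I_n -> V) :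
  (forall v, S v -> exists a, v = lincomb x a) -> (forall j, S (d j)) ->
  exists C : 'M[R]_(n, m), forall j, d j = lincomb x (row j C).
Proof.
move=> span_x Sd; have /fin_all_exists [c Ec] j := span_x _ (Sd j).
by exists (\matrix_j c j) => j; rewrite rowK.
Qed.

Lemma noetherian_mod_rV0 : noetherian_mod 'rV[R]_0.
Proof.
move=> S [S0 _ _]; exists 0%N, (fun _ => 0); split=> // v _.
by exists 0; rewrite thinmx0 linear0.
Qed.

Lemma noetherian_mod_rV1 : noetherian R -> noetherian_mod 'rV[R]_1.
Proof.
move=> HN S HS; have [S0 SD SZ] := HS.
have HI : is_ideal (fun a => S a%:M).
  split; first by rewrite raddf0.
    by move=> a b Sa Sb; rewrite raddfD; apply: SD.
  by move=> a b Sb; rewrite -scale_scalar_mx; apply: SZ.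
have [k [s gen_s]] := HN _ HI.
pose x i : 'rV[R]_1 := (s i)%:M.
have Sx i : S (x i) by apply/gen_s/ideal_gen_mem; exists i.
exists k, x; split=> // v Sv.
have [SP0 SPD SPZ] := is_submod_span x.
have /gen_s : S (v 0 0)%:M by rewrite -mx11_scalar.
rewrite {2}[v]mx11_scalar; move: (v 0 0) => c.
apply: (ideal_gen_min (I := fun c => exists a, c%:M = lincomb x a)).
- split; first by rewrite raddf0.
    by move=> a b Sa Sb; rewrite raddfD; apply: SPD.
  by move=> a b Sb; rewrite -scale_scalar_mx; apply: SPZ.
- by move=> _ [i ->]; exists (delta_mx 0 i); rewrite lincomb_delta_mx.
Qed.

Lemma noetherian_mod_rV : noetherian R -> forall k, noetherian_mod 'rV[R]_k.
Proof.
move=> HN; elim=> [|k IHk]; first exact: noetherian_mod_rV0.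
apply: (noetherian_mod_ext (g := mulmxr (row_mx 0 1%:M)) (f := @lsubmx R 1 1 k));
  last exact: noetherian_mod_rV1.
  by move=> v v0; exists (rsubmx v); rewrite /= mul_mx_row mulmx0 mulmx1 -v0 hsubmxK.
exact: IHk.
Qed.

End NoetherianModules.

Section FinFunSums.
Variables (I J : finType) (V : nmodType).

Lemma big_ffun_cons (j0 : J) (a : I) (r : seq I) (F : {ffun I -> J} -> V) : a \notin r ->
  \sum_(k : {ffun I -> J} | [forall i, (i \in a :: r) || (k i == j0)]) F k =
  \sum_(k : {ffun I -> J} | [forall i, (i \in r) || (k i == j0)])
     \sum_j F [ffun i => if i == a then j else k i].
Proof.
move=> a_r; pose set_a j (k : {ffun I -> J}) := [ffun i => if i == a then j else k i].
rewrite exchange_big (partition_big (fun k : {ffun I -> J} => k a) predT) //=.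
apply: eq_bigr => j _; rewrite (reindex_onto (set_a j) (set_a j0)); last first.
  by move=> k /andP[_ /eqP <-]; apply/ffunP => i; rewrite !ffunE; case: eqP => [->|].
apply: eq_bigl => k; rewrite [set_a j k a]ffunE !eqxx andbT.
have k_a_r : [forall i, (i \in r) || (k i == j0)] -> k a = j0.
  by move=> /forallP /(_ a); rewrite (negbTE a_r) => /eqP.
apply/andP/idP => [[/forallP k_ar /eqP k_k]|k_r].
  apply/forallP => i; have := k_ar i; rewrite in_cons ffunE.
  by case: eqVneq => [->|_] //= _; rewrite -k_k ffunE !eqxx orbT.
split; last by apply/eqP/ffunP => i; rewrite !ffunE; case: eqP => [->|//]; rewrite k_a_r.
apply/forallP => i; rewrite in_cons ffunE; case: eqP => //= _.
by move/forallP: k_r; apply.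
Qed.

End FinFunSums.

Lemma injective_ffun_same_image n (J : finType) (k0 k : {ffun 'I_n -> J}) :
  injective k -> [set k i | i : 'I_n] = [set k0 i | i : 'I_n] ->
  exists s : 'S_n, k = [ffun i => k0 (s i)].
Proof.
move=> k_inj k_k0; have k0_onto i : exists j, k0 j = k i.
  have : k i \in [set k0 i | i : 'I_n] by rewrite -k_k0; apply: imset_f.
  by case/imsetP => j _ ->; exists j.
have [s Es] := fin_all_exists k0_onto.
have s_inj : injective s by move=> i1 i2 E; apply: k_inj; rewrite -!Es E.
by exists (perm s_inj); apply/ffunP => i; rewrite ffunE permE Es.
Qed.

Lemma is_ideal_sum_injective (R : comNzRingType) (Id : R -> Prop) n (J : finType)
    (F : {ffun 'I_n -> J} -> R) : is_ideal Id ->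
  (forall k0 : {ffun 'I_n -> J}, injective k0 ->
     Id (\sum_(s : 'S_n) F [ffun i => k0 (s i)])) ->
  Id (\sum_(k : {ffun 'I_n -> J} | injectiveb k) F k).
Proof.
move=> HId Hclass.
rewrite (partition_big (fun k : {ffun 'I_n -> J} => [set k i | i : 'I_n]) xpredT) //=.
apply: is_ideal_sum => // T.
case: (pickP (fun k : {ffun 'I_n -> J} => injectiveb k && ([set k i | i : 'I_n] == T)))
  => [k0 /andP[/injectiveP k0_inj /eqP k0T]|none]; last first.
  by rewrite big_pred0 //; case: HId.
pose comp_k0 (s : 'S_n) := [ffun i => k0 (s i)].
have comp_k0_inj : injective comp_k0.
  by move=> s1 s2 /ffunP E; apply/permP => i; apply: k0_inj; have := E i; rewrite !ffunE.
rewrite (eq_bigl (mem (comp_k0 @: setT))) => [|k].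
  rewrite big_imset; last by move=> s1 s2 _ _; apply: comp_k0_inj.
  by rewrite (eq_bigl xpredT) => [|s]; [apply: Hclass | rewrite inE].
apply/andP/imsetP => [[/injectiveP k_inj /eqP kT]|[s _ ->]].
  by have [s ->] := injective_ffun_same_image k_inj (etrans kT (esym k0T)); exists s.
split; first by apply/injectiveP => i1 i2; rewrite !ffunE => /k0_inj /perm_inj.
rewrite -k0T; apply/eqP/setP => y; apply/imsetP/imsetP => [[i _ ->]|[i _ ->]].
  by exists (s i); rewrite ?ffunE.
by exists (s^-1 i)%g; rewrite ?ffunE ?permKV.
Qed.

Section KernelForms.
Variables (R : comNzRingType) (M : lmodType R) (n : nat) (pi : {linear 'rV[R]_n -> M}).
Local Notation Nlin := (Nlin pi).
Local Notation alt_form := (alt_form pi).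

Lemma Nlin_comb a phi psi : Nlin phi -> Nlin psi -> Nlin (fun v => a * phi v + psi v).
Proof. by move=> Nphi Npsi b u v Nu Nv; rewrite Nphi // Npsi //; ring. Qed.

Lemma Nlin0 : Nlin (fun _ => 0).
Proof. by move=> *; rewrite mulr0 addr0. Qed.

Lemma Nlin_sum (J : Type) (r : seq J) (c : J -> R) (f : J -> 'rV[R]_n -> R) :
  (forall j, Nlin (f j)) -> Nlin (fun v => \sum_(j <- r) c j * f j v).
Proof.
move=> Nf; elim: r => [|j r IHr] a u v Nu Nv; first by rewrite !big_nil mulr0 addr0.
by rewrite !big_cons; apply: (Nlin_comb (c j) (Nf j) IHr).
Qed.

Lemma Nlin_upd g i phi : (forall j, Nlin (g j)) -> Nlin phi -> forall j, Nlin (upd g i phi j).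
Proof. by move=> Ng Nphi j; rewrite /upd; case: eqP. Qed.

Lemma Nlin_coord i : Nlin (fun v => v 0 i).
Proof. by move=> a u v _ _; rewrite !mxE. Qed.

Lemma alt_form_comb a Phi Psi : alt_form Phi -> alt_form Psi ->
  alt_form (fun g => a * Phi g + Psi g).
Proof.
move=> [WPhi LPhi APhi] [WPsi LPsi APsi]; split.
- by move=> g g' Ng Ng' gg'; rewrite (WPhi g g') // (WPsi g g').
- by move=> g i b phi psi Ng Nphi Npsi; rewrite LPhi // LPsi //; ring.
- by move=> g i j Ng nij gij; rewrite (APhi g i j) // (APsi g i j) // mulr0 addr0.
Qed.

Lemma is_ideal_char_pres : is_ideal (char_pres pi).
Proof.
have alt0 : alt_form (fun _ => 0) by split=> // *; rewrite mulr0 addr0.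
split; first by exists (fun _ => 0).
- move=> _ _ [Phi [HPhi ->]] [Psi [HPsi ->]]; exists (fun g => 1 * Phi g + Psi g).
  by rewrite mul1r; split=> //; apply: alt_form_comb.
- move=> a _ [Phi [HPhi ->]]; exists (fun g => a * Phi g + 0).
  by rewrite addr0; split=> //; apply: alt_form_comb.
Qed.

Lemma alt_form_det (A : 'M[R]_n) : (forall i, ker_pres pi (row i A)) ->
  alt_form (fun g => \det (\matrix_(i, j) g i (row j A))).
Proof.
move=> NA; split.
- by move=> g g' Ng Ng' gg'; congr (\det _); apply/matrixP => i j; rewrite !mxE gg'.
- move=> g i a phi psi Ng Nphi Npsi.
  rewrite -[X in _ = _ + X]mul1r; apply: (determinant_multilinear (i0 := i)).
  + by apply/rowP => j; rewrite !mxE /upd eqxx mul1r.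
  + by apply/matrixP => k j; rewrite !mxE /upd eq_sym (negbTE (neq_lift _ _)).
  + by apply/matrixP => k j; rewrite !mxE /upd eq_sym (negbTE (neq_lift _ _)).
- by move=> g i j Ng nij gij; apply: (determinant_alternate nij) => k; rewrite !mxE gij.
Qed.

Lemma is_ideal_Fitt0 : is_ideal (Fitt0 pi).
Proof. exact: is_ideal_gen. Qed.

Lemma Fitt0_sub_char_pres r : Fitt0 pi r -> char_pres pi r.
Proof.
apply: ideal_gen_min; first exact: is_ideal_char_pres.
move=> _ [A [NA ->]]; exists (fun g => \det (\matrix_(i, j) g i (row j A))).
split; first exact: alt_form_det.
by rewrite -det_tr; congr (\det _); apply/matrixP => i j; rewrite !mxE.
Qed.

End KernelForms.

Arguments Nlin0 {R M n pi}.

Section AlternatingForms.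
Variables (R : comNzRingType) (M : lmodType R) (n : nat) (pi : {linear 'rV[R]_n -> M}).
Variable Phi : ('I_n -> 'rV[R]_n -> R) -> R.
Hypothesis HPhi : alt_form pi Phi.
Local Notation Nlin := (Nlin pi).

Lemma alt_form_updD g i phi psi : (forall j, Nlin (g j)) -> Nlin phi -> Nlin psi ->
  Phi (upd g i (fun v => phi v + psi v)) = Phi (upd g i phi) + Phi (upd g i psi).
Proof.
move=> Ng Nphi Npsi; have [_ L _] := HPhi; rewrite -[Phi (upd g i phi)]mul1r -L //.
by congr (Phi (upd g i _)); apply: functional_extensionality => v; rewrite mul1r.
Qed.

Lemma alt_form_upd0 g i : (forall j, Nlin (g j)) -> Phi (upd g i (fun _ => 0)) = 0.
Proof.
move=> Ng; have := alt_form_updD i Ng Nlin0 Nlin0.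
have -> : (fun _ : 'rV[R]_n => 0 + 0) = (fun _ => 0 : R).
  by apply: functional_extensionality => v; rewrite addr0.
by rewrite -{1}[Phi _]addr0 => /addrI <-.
Qed.

Lemma alt_form_upd_sum g i (J : Type) (r : seq J) (c : J -> R) (f : J -> 'rV[R]_n -> R) :
  (forall j, Nlin (g j)) -> (forall j, Nlin (f j)) ->
  Phi (upd g i (fun v => \sum_(j <- r) c j * f j v)) =
  \sum_(j <- r) c j * Phi (upd g i (f j)).
Proof.
move=> Ng Nf; have [_ L _] := HPhi; elim: r => [|j r IHr].
  rewrite big_nil -[RHS](alt_form_upd0 i Ng); congr (Phi (upd g i _)).
  by apply: functional_extensionality => v; rewrite big_nil.
rewrite big_cons -IHr -(L _ _ _ _ _ Ng (Nf j) (Nlin_sum r c Nf)); congr (Phi (upd g i _)).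
by apply: functional_extensionality => v; rewrite big_cons.
Qed.

Lemma alt_form_tperm g a b : (forall j, Nlin (g j)) -> a != b ->
  Phi (fun i => g (tperm a b i)) = - Phi g.
Proof.
move=> Ng nab; have [_ _ A] := HPhi.
pose h x y := upd (upd g a x) b y.
have Nh x y : Nlin x -> Nlin y -> forall j, Nlin (h x y j).
  by move=> Nx Ny; apply: Nlin_upd => //; apply: Nlin_upd.
have h_swap x y : h x y = upd (upd g b y) a x.
  apply: functional_extensionality => i; rewrite /h /upd.
  by case: eqVneq => [->|//]; rewrite eq_sym (negbTE nab).
have h_diag x : Nlin x -> Phi (h x x) = 0.
  move=> Nx; apply: (A _ a b) => // [|v _]; first exact: Nh.
  by rewrite /h /upd (negbTE nab) !eqxx.
pose u v := g a v + g b v.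
have Nu : Nlin u by move=> c v w Nv Nw; rewrite /u (Ng a) // (Ng b) // mulrDr addrACA.
have h_uD y : Nlin y -> Phi (h u y) = Phi (h (g a) y) + Phi (h (g b) y).
  by move=> Ny; rewrite !h_swap alt_form_updD //; apply: Nlin_upd.
have h_g : h (g a) (g b) = g.
  apply: functional_extensionality => i; rewrite /h /upd.
  by do 2 case: eqP => [->|] //.
have h_tperm : h (g b) (g a) = fun i => g (tperm a b i).
  apply: functional_extensionality => i; rewrite /h /upd.
  case: tpermP => [->|->|/eqP nia /eqP nib];
    by rewrite ?eqxx ?(negbTE nab) ?(negbTE nia) ?(negbTE nib).
(* Expand 0 = Phi (h u u) with u = g a + g b in both slots. *)
have := h_diag u Nu.
rewrite /h (alt_form_updD _ (Nlin_upd a Ng Nu) (Ng a) (Ng b)) -/(h u (g a)) -/(h u (g b)).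
rewrite !h_uD // !h_diag // h_g h_tperm add0r addr0.
by move/eqP; rewrite addr_eq0 => /eqP.
Qed.

Lemma alt_form_perm g (s : 'S_n) : (forall j, Nlin (g j)) ->
  Phi (fun i => g (s i)) = (-1) ^+ s * Phi g.
Proof.
have [ts -> dts] := prod_tpermP s; elim: ts dts g => [|t ts IHts] /= dts g Ng.
  rewrite big_nil odd_perm1 mul1r; congr Phi.
  by apply: functional_extensionality => i; rewrite perm1.
case/andP: dts => dt dts; rewrite big_cons odd_mul_tperm dt signr_addb mulN1r mulNr.
set s' := (\prod_(t <- ts) _)%g.
rewrite -(IHts dts g Ng) -(alt_form_tperm (fun j => Ng (s' j)) dt).
by congr Phi; apply: functional_extensionality => i; rewrite permM.
Qed.

Lemma alt_form_expand_seq (J : finType) (j0 : J) (c : 'I_n -> J -> R)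
    (f : J -> 'rV[R]_n -> R) (r : seq 'I_n) g :
  (forall j, Nlin (f j)) -> (forall i, Nlin (g i)) -> uniq r ->
  Phi (fun i => if i \in r then (fun v => \sum_j c i j * f j v) else g i) =
  \sum_(k : {ffun 'I_n -> J} | [forall i, (i \in r) || (k i == j0)])
     (\prod_(i <- r) c i (k i)) * Phi (fun i => if i \in r then f (k i) else g i).
Proof.
move=> Nf; elim: r g => [|a r IHr] g Ng /=.
  rewrite (eq_bigl (pred1 [ffun=> j0])) => [|k]; first by rewrite big_pred1_eq big_nil mul1r.
  apply/forallP/eqP => [k_j0|-> i]; last by rewrite ffunE.
  by apply/ffunP => i; rewrite ffunE; apply/eqP/k_j0.
case/andP => a_r uniq_r; pose psi i v := \sum_j c i j * f j v.
have Npsi i : Nlin (psi i) by apply: Nlin_sum.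
have upd_r (h : 'I_n -> 'rV[R]_n -> R) :
    (fun i => if i \in r then h i else upd g a (psi a) i) =
    upd (fun i => if i \in r then h i else g i) a (psi a).
  apply: functional_extensionality => i; rewrite /upd.
  by case: eqVneq => [->|//]; rewrite (negbTE a_r).
have -> : (fun i => if i \in a :: r then psi i else g i) =
          (fun i => if i \in r then psi i else upd g a (psi a) i).
  rewrite upd_r; apply: functional_extensionality => i.
  by rewrite in_cons /upd; case: eqP => [->|].
rewrite IHr ?big_ffun_cons //; last exact: Nlin_upd.
apply: eq_bigr => k _; rewrite upd_r alt_form_upd_sum //; last first.
  by move=> i; case: (i \in r).
rewrite big_distrr; apply: eq_bigr => j _ /=.
rewrite big_cons ffunE eqxx -[RHS]mulrA mulrCA; congr (_ * (_ * _)).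
  apply: eq_big_seq => i i_r; rewrite ffunE; case: eqP => // i_a.
  by move: i_r; rewrite i_a (negbTE a_r).
congr Phi; apply: functional_extensionality => i; rewrite /upd in_cons ffunE.
by case: eqP.
Qed.

Lemma alt_form_expand (J : finType) (j0 : J) (c : 'I_n -> J -> R) (f : J -> 'rV[R]_n -> R) :
  (forall j, Nlin (f j)) ->
  Phi (fun i v => \sum_j c i j * f j v) =
  \sum_(k : {ffun 'I_n -> J}) (\prod_i c i (k i)) * Phi (fun i => f (k i)).
Proof.
move=> Nf; pose psi i v := \sum_j c i j * f j v.
transitivity (Phi (fun i => if i \in index_enum 'I_n then psi i else psi i)).
  by congr Phi; apply: functional_extensionality => i; rewrite if_same.
rewrite (alt_form_expand_seq j0) ?index_enum_uniq // => [|i]; last exact: Nlin_sum.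
rewrite (eq_bigl xpredT) => [|k]; last by apply/forallP => i; rewrite mem_index_enum.
apply: eq_bigr => k _; congr (_ * Phi _); apply: functional_extensionality => i.
by rewrite mem_index_enum.
Qed.

Lemma alt_form_sum_perm m (x : 'I_m -> 'rV[R]_n) (f : 'I_m -> 'rV[R]_n -> R)
    (k0 : 'I_n -> 'I_m) : (forall k, Nlin (f k)) ->
  \sum_(s : 'S_n) (\prod_i x (k0 (s i)) 0 i) * Phi (fun i => f (k0 (s i))) =
  \det (\matrix_(j, l) x (k0 j) 0 l) * Phi (fun i => f (k0 i)).
Proof.
move=> Nf; rewrite -det_tr big_distrl; apply: eq_bigr => s _ /=.
rewrite (alt_form_perm (g := fun j => f (k0 j))) // mulrCA mulrA; congr (_ * _ * _).
by apply: eq_bigr => i _; rewrite !mxE.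
Qed.

Lemma alt_form_lincomb_Fitt0 m (x : 'I_m -> 'rV[R]_n) (f : 'I_m -> 'rV[R]_n -> R) :
  (0 < n)%N -> (forall k, ker_pres pi (x k)) -> (forall k, Nlin (f k)) ->
  Fitt0 pi (Phi (fun i v => \sum_k x k 0 i * f k v)).
Proof.
move=> n_gt0 Nx Nf; have [_ _ A] := HPhi; have [F0 _ FM] := is_ideal_Fitt0 pi.
case: m => [|m] in x f Nx Nf *.
  have -> : (fun i v => \sum_(k < 0) x k 0 i * f k v) =
            upd (fun _ _ => 0) (Ordinal n_gt0) (fun _ => 0).
    apply: functional_extensionality => i; apply: functional_extensionality => v.
    by rewrite big_ord0 /upd if_same.
  by rewrite alt_form_upd0 // => i; apply: Nlin0.
rewrite (alt_form_expand ord0 (fun i k => x k 0 i)) //.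
rewrite (bigID (fun k : {ffun _} => injectiveb k)) /= [X in _ + X]big1 ?addr0 => [|k].
  apply: is_ideal_sum_injective; first exact: is_ideal_Fitt0.
  move=> k0 k0_inj; rewrite (eq_bigr (fun s : 'S_n =>
    (\prod_i x (k0 (s i)) 0 i) * Phi (fun i => f (k0 (s i))))) => [|s _]; last first.
    by congr (_ * Phi _); [apply: eq_bigr => i _ | apply: functional_extensionality => i];
      rewrite ffunE.
  rewrite alt_form_sum_perm // mulrC; apply: FM.
  apply: ideal_gen_mem; exists (\matrix_(j, l) x (k0 j) 0 l); split=> // j.
  by rewrite rowK; apply: Nx.
move=> /injectivePn [i1 [i2 i12 k12]].
by rewrite (A _ i1 i2) ?mulr0 // => v _; rewrite k12.
Qed.

End AlternatingForms.

Section Kernel.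
Variables (R : comNzRingType) (V M : lmodType R) (pi : {linear V -> M}).

Definition ker_pred : {pred V} := [pred v | pi v == 0].

Fact ker_pred_submod_closed : submod_closed ker_pred.
Proof.
split; first by rewrite inE linear0.
by move=> a u v; rewrite !inE linearP => /eqP -> /eqP ->; rewrite scaler0 addr0.
Qed.

HB.instance Definition _ := GRing.isSubmodClosed.Build R V ker_pred ker_pred_submod_closed.

Record kernel := Kernel { kernel_val :> V; _ : kernel_val \in ker_pred }.
HB.instance Definition _ := [isSub for kernel_val].
HB.instance Definition _ := [Choice of kernel by <:].
HB.instance Definition _ := [SubChoice_isSubLmodule of kernel by <:].

Section Corestriction.
Variables (U : lmodType R) (h : {linear U -> V}) (hP : forall u, pi (h u) = 0).

Definition ker_corestr (u : U) : kernel := Kernel (introT eqP (hP u)).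

Fact ker_corestr_is_linear : linear ker_corestr.
Proof. by move=> a u v; apply: val_inj; rewrite /= linearP. Qed.

HB.instance Definition _ :=
  GRing.isLinear.Build R U kernel _ ker_corestr ker_corestr_is_linear.

End Corestriction.

Lemma projective_lift_to_span (P : lmodType R) m (x : 'I_m -> V) :
  projective P -> (forall k, pi (x k) = 0) ->
  (forall v, pi v = 0 -> exists a, v = lincomb x a) ->
  forall h : {linear P -> V}, (forall y, pi (h y) = 0) ->
  exists t : {linear P -> 'rV[R]_m}, forall y, h y = lincomb x (t y).
Proof.
move=> HP Nx span_x h hP.
have Nlx a : pi (lincomb x a) = 0.
  by rewrite linear_lincomb; apply: big1 => k _; rewrite /= Nx scaler0.
have [|t Ht] := HP _ _ (ker_corestr Nlx) (ker_corestr hP).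
  by move=> w; have [a Ea] := span_x _ (eqP (valP w)); exists a; apply: val_inj.
by exists t => y; have := congr1 val (Ht y).
Qed.

End Kernel.

Lemma rV_lift (R : comNzRingType) n (P M : lmodType R) (p : {linear P -> M})
    (pi : {linear 'rV[R]_n -> M}) :
  surjective_map p -> exists tau : {linear 'rV[R]_n -> P}, forall v, p (tau v) = pi v.
Proof.
move=> p_onto; have [q Eq] := fin_all_exists (fun j => p_onto (pi (delta_mx 0 j))).
by exists (lincomb q) => v; rewrite linear_lincomb (linear_rV_lincomb pi v); apply: eq_lincomb.
Qed.

Section DualBasis.
Variables (R : comNzRingType) (M : lmodType R) (n : nat) (pi : {linear 'rV[R]_n -> M}).

Lemma kernel_fin_spanned : noetherian R -> fin_spanned (ker_pres pi).
Proof.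
move=> HN; apply: (noetherian_mod_rV HN); split; first exact: linear0.
  by move=> u v Nu Nv; rewrite /ker_pres linearD Nu Nv addr0.
by move=> a u Nu; rewrite /ker_pres linearZ Nu; apply: scaler0.
Qed.

Lemma kernel_dual_basis : noetherian R -> surjective_map pi -> proj_dim_le1 M ->
  exists m (x : 'I_m -> 'rV[R]_n) (F : 'rV[R]_n -> 'rV[R]_m),
  [/\ forall k, ker_pres pi (x k), forall k, Nlin pi (fun v => F v 0 k) &
      forall v, ker_pres pi v -> v = lincomb x (F v)].
Proof.
move=> HN pi_onto [P0 [P1 [i [p [HP0 HP1 i_inj p_onto ker_p]]]]].
have [m [x [Nx span_x]]] := kernel_fin_spanned HN.
have [sigma pi_sigma] := HP0 _ _ pi p pi_onto.
have [tau p_tau] := rV_lift pi p_onto.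
have [Y tau_Y] : exists Y : 'rV[R]_n -> P1, forall v, pi v = 0 -> tau v = i (Y v).
  apply: (functional_choice (fun v y => pi v = 0 -> tau v = i y)) => v.
  case: (classic (pi v = 0)) => [Nv|nNv]; last by exists 0 => /nNv.
  have /ker_p [y Ey] : p (tau v) = 0 by rewrite p_tau.
  by exists y.
have N_sigma_i y : pi ((sigma \o i) y) = 0 by rewrite /= pi_sigma; apply/ker_p; exists y.
have [t sigma_i] := projective_lift_to_span HP1 Nx span_x N_sigma_i.
have [C EC] : exists C : 'M[R]_(n, m),
    forall j, delta_mx 0 j - sigma (tau (delta_mx 0 j)) = lincomb x (row j C).
  by apply: span_coord_mx span_x _ => j; rewrite /ker_pres linearB pi_sigma p_tau subrr.
pose F v := v *m C + t (Y v).
have F_lin a u v : pi u = 0 -> pi v = 0 -> F (a *: u + v) = a *: F u + F v.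
  move=> Nu Nv; have Nauv : pi (a *: u + v) = 0 by rewrite linearP Nu Nv scaler0 addr0.
  have Y_lin : Y (a *: u + v) = a *: Y u + Y v.
    by apply: i_inj; rewrite -tau_Y // !linearP -!tau_Y.
  by rewrite /F Y_lin linearP mulmxDl -scalemxAl scalerDr addrACA.
exists m, x, F; split=> // [k a u v Nu Nv|v Nv]; first by rewrite F_lin // !mxE.
rewrite /F linearD /= lincomb_mulmx -sigma_i /= -tau_Y // -(eq_lincomb _ EC) lincombB.
by rewrite -(linear_rV_lincomb (sigma \o tau)) subrK; apply: row_sum_delta.
Qed.

End DualBasis.

Lemma char_pres_sub_Fitt0 (R : comNzRingType) (M : lmodType R) n
    (pi : {linear 'rV[R]_n -> M}) :
  noetherian R -> (0 < n)%N -> surjective_map pi -> proj_dim_le1 M ->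
  forall r, char_pres pi r -> Fitt0 pi r.
Proof.
move=> HN n_gt0 pi_onto pd1 _ [Phi [HPhi ->]]; have [WPhi _ _] := HPhi.
have [m [x [F [Nx NF decF]]]] := kernel_dual_basis HN pi_onto pd1.
rewrite (WPhi _ (fun i v => \sum_k x k 0 i * F v 0 k)) => [||i|i v Nv].
- exact: (alt_form_lincomb_Fitt0 HPhi (f := fun k v => F v 0 k)).
- exact: Nlin_coord.
- exact: Nlin_sum.
- by rewrite {1}(decF v Nv) /lincomb summxE; apply: eq_bigr => k _; rewrite mxE mulrC.
Qed.

Unset Implicit Arguments.

Theorem propositionC7 (R : comNzRingType) (M : lmodType R) (n : nat)
  (pi : {linear 'rV[R]_n -> M}) :
  noetherian R -> (0 < n)%N -> surjective_map pi ->
  (forall r, Fitt0 pi r -> char_pres pi r) /\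
  (proj_dim_le1 M -> forall r, Fitt0 pi r <-> char_pres pi r).
Proof.
move=> HN n_gt0 pi_onto; split=> [|pd1 r]; first exact: Fitt0_sub_char_pres.
by split; [apply: Fitt0_sub_char_pres | apply: char_pres_sub_Fitt0].
Qed.
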